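(* Let $k\ge1$, $\lambda_0>0$, and let $Q(x,dy)$ be a spatially homogeneous Markov kernel on $\mathbf{R}^k$ (i.e. $Q(x,dy)=Q(x-z,dy-z)$ and $Q(z,\mathbf{R}^k)=1$ for all $x,z$) with $Q(0,\{0\})=0$ and symmetric with respect to Lebesgue measure, $Q(x,dy)dx=Q(y,dx)dy$. Consider the compound Poisson process $X_t=x+\sum_{n=1}^{N_t}\xi_n$, where $N$ is a Poisson process with rate $\lambda_0$ and $(\xi_n)$ are i.i.d. with law $Q(0,\cdot)$ independent of $N$; it is symmetric with respect to $m(dx)=\lambda_0^{-1}dx$, and its associated Dirichlet form on $L^2(\mathbf{R}^k,m)$ is $\mathcal{F}=L^2(\mathbf{R}^k,m)$, $\mathcal{E}(u,v)=\frac12\int_{\mathbf{R}^k\times\mathbf{R}^k}(u(x)-u(y))(v(x)-v(y))Q(x,dy)\lambda_0\,m(dx)$, a regular Dirichlet form. Then $(\mathcal{E},\mathcal{F})$ has no proper regular Dirichlet subspace: every regular Dirichlet subspace of $(\mathcal{E},\mathcal{F})$ equals $(\mathcal{E},\mathcal{F})$.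
   Context: A regular Dirichlet subspace of a regular Dirichlet form $(\mathcal{E},\mathcal{F})$ on $L^2(E,m)$ is a regular Dirichlet form $(\mathcal{E}',\mathcal{F}')$ on $L^2(E,m)$ with $\mathcal{F}'\subset\mathcal{F}$ and $\mathcal{E}'(u,v)=\mathcal{E}(u,v)$ for all $u,v\in\mathcal{F}'$; it is proper if it differs from $(\mathcal{E},\mathcal{F})$. *)

From HB Require Import structures.
From mathcomp Require Import all_boot all_order all_algebra.
From mathcomp Require Import all_classical all_reals all_analysis.
Set Implicit Arguments. Unset Strict Implicit. Unset Printing Implicit Defensive.
Import Order.TTheory GRing.Theory Num.Theory.
Local Open Scope classical_set_scope.
Local Open Scope ring_scope.

(** Elements of L^2 are represented by measurable real functions; a form is a
    pair (F, E) with F a set of representatives (closed under m-a.e. equality)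
    and E a real-valued map on pairs of functions whose values on F only
    depend on the a.e. classes. *)
Section DirichletGeneric.
Context {d : measure_display} {T : measurableType d} {R : realType}.
Variable m : {measure set T -> \bar R}.

Definition l2sq (f : T -> R) : \bar R := (\int[m]_x ((f x) ^+ 2)%:E)%E.

Definition L2 : set (T -> R) :=
  [set f | measurable_fun setT f /\ (l2sq f < +oo)%E].

Definition ae_equal (f g : T -> R) : Prop := {ae m, forall x, f x = g x}.

Definition E1sq (E : (T -> R) -> (T -> R) -> R) (w : T -> R) : \bar R :=
  ((E w w)%:E + l2sq w)%E.

Definition is_L2_subspace (F : set (T -> R))
    (E : (T -> R) -> (T -> R) -> R) : Prop :=
  [/\ F `<=` L2,
      F (fun _ => 0),
      (forall (a : R) f g, F f -> F g -> F (fun x => a * f x + g x)),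
      (forall f g, F f -> L2 g -> ae_equal f g -> F g)
    & (forall f f' g g', F f -> F f' -> F g -> F g' ->
         ae_equal f f' -> ae_equal g g' -> E f g = E f' g')].

Definition dense_in_L2 (F : set (T -> R)) : Prop :=
  forall f, L2 f -> forall e : R, 0 < e ->
    exists g, F g /\ (l2sq (fun x => (f x - g x)%R) < e%:E)%E.

Definition symmetric_form (F : set (T -> R))
    (E : (T -> R) -> (T -> R) -> R) : Prop :=
  [/\ (forall f g, F f -> F g -> E f g = E g f),
      (forall (a : R) f g h, F f -> F g -> F h ->
         E (fun x => a * f x + g x) h = a * E f h + E g h)
    & (forall f, F f -> 0 <= E f f)].

Definition closed_form (F : set (T -> R))
    (E : (T -> R) -> (T -> R) -> R) : Prop :=
  forall u : nat -> T -> R, (forall n, F (u n)) ->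
    (forall e : R, 0 < e -> exists N, forall n p, (N <= n)%N -> (N <= p)%N ->
       (E1sq E (fun x => (u n x - u p x)%R) < e%:E)%E) ->
    exists2 v, F v &
      forall e : R, 0 < e -> exists N, forall n, (N <= n)%N ->
        (E1sq E (fun x => (u n x - v x)%R) < e%:E)%E.

Definition markovian (F : set (T -> R))
    (E : (T -> R) -> (T -> R) -> R) : Prop :=
  forall u, F u ->
    F (fun x => Num.min (Num.max 0 (u x)) 1) /\
    E (fun x => Num.min (Num.max 0 (u x)) 1) (fun x => Num.min (Num.max 0 (u x)) 1)
      <= E u u.

Definition is_dirichlet_form (F : set (T -> R))
    (E : (T -> R) -> (T -> R) -> R) : Prop :=
  [/\ is_L2_subspace F E, dense_in_L2 F, symmetric_form F E,
      closed_form F E & markovian F E].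

End DirichletGeneric.

(** * The state space R^k, as k-tuples of reals (with the product, i.e.
    Borel, sigma-algebra generated by the coordinates). *)
Section Rk.
Context {R : realType} {k : nat}.

Definition tsub (x z : k.-tuple R) : k.-tuple R :=
  [tuple tnth x i - tnth z i | i < k].

Definition tzero : k.-tuple R := [tuple (0 : R) | i < k].

Definition box (a b : k.-tuple R) : set (k.-tuple R) :=
  [set x | forall i, tnth a i < tnth x i <= tnth b i].
Definition box_vol (a b : k.-tuple R) : R :=
  \prod_(i < k) Num.max 0 (tnth b i - tnth a i).

Definition continuous_Rk (f : k.-tuple R -> R) : Prop :=
  forall (x : k.-tuple R) (e : R), 0 < e -> exists2 delta : R, 0 < delta &
    forall y, (forall i, `|tnth y i - tnth x i| < delta) -> `|f y - f x| < e.

Definition compact_support_Rk (f : k.-tuple R -> R) : Prop :=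
  exists M : R, forall x, (exists i, M < `|tnth x i|) -> f x = 0.

Definition Cc_Rk (f : k.-tuple R -> R) : Prop :=
  continuous_Rk f /\ compact_support_Rk f.

Variable m : {measure set (k.-tuple R) -> \bar R}.

Definition is_regular_dirichlet_form (F : set (k.-tuple R -> R))
    (E : (k.-tuple R -> R) -> (k.-tuple R -> R) -> R) : Prop :=
  [/\ is_dirichlet_form m F E,
      (forall u, F u -> forall e : R, 0 < e -> exists g, [/\ F g, Cc_Rk g &
          (E1sq m E (fun x => (u x - g x)%R) < e%:E)%E])
    &
      (forall f, Cc_Rk f -> forall e : R, 0 < e -> exists g, [/\ F g, Cc_Rk g &
          forall x, `|f x - g x| < e])].

Definition is_regular_dirichlet_subspace (F : set (k.-tuple R -> R))
    (E : (k.-tuple R -> R) -> (k.-tuple R -> R) -> R)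
    (F' : set (k.-tuple R -> R))
    (E' : (k.-tuple R -> R) -> (k.-tuple R -> R) -> R) : Prop :=
  [/\ is_regular_dirichlet_form F' E', F' `<=` F &
      forall u v, F' u -> F' v -> E' u v = E u v].

End Rk.

Definition jump_form {R : realType} {k : nat} (lam0 : R)
    (m : {measure set (k.-tuple R) -> \bar R})
    (Q : R.-pker (k.-tuple R) ~> (k.-tuple R))
    (u v : k.-tuple R -> R) : R :=
  2^-1 * \int[m]_x (lam0 *
     \int[Q x]_y ((u x - u y) * (v x - v y)))%R.

From HB Require Import structures.
From mathcomp Require Import all_boot all_order all_algebra.
From mathcomp Require Import all_classical all_reals all_analysis.
From mathcomp Require Import measurable_realfun.
From mathcomp Require Import ring lra.
Set Implicit Arguments. Unset Strict Implicit. Unset Printing Implicit Defensive.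
Import Order.TTheory GRing.Theory Num.Theory.
Local Open Scope classical_set_scope.
Local Open Scope ring_scope.

(* Symmetry of Q makes m invariant under Q, so (u(x) - u(y))^2 <= 2 u(x)^2 + 2 u(y)^2
   integrates to E(u, u) <= 2 lam0 |u|^2: the jump form is bounded on L^2(m).
   On a Dirichlet subspace F' the E_1-norm is therefore equivalent to the L^2-norm,
   so F', being E_1-complete, is closed in L^2; being also dense, F' = L^2. *)

Lemma exists_mulr_invSn_lt (R : realType) (c e : R) : 0 <= c -> 0 < e ->
  exists N, forall n, (N <= n)%N -> c * n.+1%:R^-1 < e.
Proof.
move=> c_ge0 e_gt0; exists (Num.truncn (c / e)) => n Nn.
have : c / e < n.+1%:R by apply: lt_le_trans (truncnS_gt _) _; rewrite ler_nat.
by rewrite ltr_pdivrMr // ltr_pdivrMr // mulrC.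
Qed.

Section l2sq.
Context d (T : measurableType d) (R : realType).
Variable m : {measure set T -> \bar R}.

Lemma l2sq_ge0 f : (0 <= l2sq m f)%E.
Proof. by apply: integral_ge0 => x _; rewrite lee_fin sqr_ge0. Qed.

Lemma l2sq_fin_num f (r : R) : (l2sq m f < r%:E)%E -> l2sq m f \is a fin_num.
Proof. by move=> lt_fr; rewrite ge0_fin_numE ?l2sq_ge0 // (lt_le_trans lt_fr) ?leey. Qed.

Lemma measurable_EFin_sqr (f : T -> R) : measurable_fun setT f ->
  measurable_fun setT (fun x => (f x ^+ 2)%:E).
Proof. by move=> mf; apply/measurable_EFinP; exact: measurable_funX. Qed.

Lemma l2sq_subC (f g : T -> R) :
  l2sq m (fun x => f x - g x) = l2sq m (fun x => g x - f x).
Proof. by apply: eq_integral => x _; rewrite -opprB sqrrN. Qed.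

Lemma l2sq_sub_le (f g h : T -> R) : measurable_fun setT f ->
  measurable_fun setT g -> measurable_fun setT h ->
  (l2sq m (fun x => f x - g x)%R <=
   2%:E * l2sq m (fun x => f x - h x)%R + 2%:E * l2sq m (fun x => h x - g x)%R)%E.
Proof.
move=> mf mg mh.
have msub (u v : T -> R) : measurable_fun setT u -> measurable_fun setT v ->
    measurable_fun setT (fun x => ((u x - v x) ^+ 2)%:E).
  by move=> mu mv; apply: measurable_EFin_sqr; exact: measurable_funB.
have mfh := msub f h mf mh; have mhg := msub h g mh mg.
rewrite /l2sq -ge0_integralZl //; last by move=> x _; rewrite lee_fin sqr_ge0.
rewrite -[X in (_ + X)%E]ge0_integralZl //; last by move=> x _; rewrite lee_fin sqr_ge0.
rewrite -ge0_integralD //; try exact: measurable_funeM.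
all: try by move=> x _; rewrite -EFinM lee_fin mulr_ge0 ?sqr_ge0.
apply: ge0_le_integral => //.
- by move=> x _; rewrite lee_fin sqr_ge0.
- exact: msub.
- by apply: emeasurable_funD; exact: measurable_funeM.
- move=> x _; rewrite -!EFinM -EFinD lee_fin.
  have -> : f x - g x = (f x - h x) + (h x - g x) by rewrite addrA subrK.
  rewrite -subr_ge0.
  have -> : forall u v : R, 2 * u ^+ 2 + 2 * v ^+ 2 - (u + v) ^+ 2 = (u - v) ^+ 2.
    by move=> u v; ring.
  exact: sqr_ge0.
Qed.

Lemma l2sq_sub_lt (f g h : T -> R) (a b : R) : measurable_fun setT f ->
  measurable_fun setT g -> measurable_fun setT h ->
  (l2sq m (fun x => f x - h x)%R < a%:E)%E -> (l2sq m (fun x => h x - g x)%R < b%:E)%E ->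
  (l2sq m (fun x => f x - g x)%R < (2 * a + 2 * b)%:E)%E.
Proof.
move=> mf mg mh fh_lt hg_lt; apply: le_lt_trans (l2sq_sub_le mf mg mh) _.
by rewrite (EFinD (2 * a)) (EFinM 2 a) (EFinM 2 b); apply: lteD; rewrite lte_pmul2l.
Qed.

Lemma ae_equal_of_l2sq_lt (f g : T -> R) :
  measurable_fun setT f -> measurable_fun setT g ->
  (forall e : R, 0 < e -> (l2sq m (fun x => f x - g x)%R < e%:E)%E) ->
  ae_equal m f g.
Proof.
move=> mf mg small.
have l2sq0 : l2sq m (fun x => f x - g x) = 0%E.
  move: (l2sq_ge0 (fun x => f x - g x)) small.
  case: (l2sq _ _) => [r||] //; last by move=> _ /(_ 1 ltr01).
  rewrite lee_fin le_eqVlt => /orP[/eqP <- // | r_gt0] /(_ r r_gt0).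
  by rewrite ltxx.
have mfg : measurable_fun setT (fun x => ((f x - g x) ^+ 2)%:E).
  by apply: measurable_EFin_sqr; exact: measurable_funB.
have : (\int[m]_x `|((f x - g x) ^+ 2)%:E| = 0)%E.
  by rewrite -l2sq0; apply: eq_integral => x _; rewrite gee0_abs // lee_fin sqr_ge0.
move=> /(ae_eq_integral_abs m measurableT mfg).1; apply: filterS => x /(_ I) /eqP.
by rewrite eqe sqrf_eq0 subr_eq0 => /eqP.
Qed.

End l2sq.

Section invariant_measure.
Context d (X : measurableType d) (R : realType).
Variable m : {measure set X -> \bar R}.
Local Open Scope ereal_scope.

Definition kernel_invariant (Q : R.-ker X ~> X) :=
  forall A, measurable A -> \int[m]_x Q x A = m A.

Lemma kernel_invariant_of_symmetric (Q : R.-pker X ~> X) :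
  (forall C : set (X * X), measurable C ->
     \int[m]_x Q x (xsection C x) = \int[m]_y Q y (ysection C y)) ->
  kernel_invariant Q.
Proof.
move=> Qsym A mA; have := Qsym _ (measurableX measurableT mA).
under eq_integral do rewrite in_xsectionX ?in_setT //.
move=> ->; transitivity (\int[m]_y (\1_A y)%:E); last by rewrite integral_indic // setIT.
apply: eq_integral => y _.
rewrite indicE; have [Ay|nAy] := boolP (y \in A).
  rewrite (_ : ysection _ _ = setT) ?prob_kernel //.
  by apply/seteqP; split => x //= _; apply/mem_set; split => //; exact/set_mem.
rewrite (_ : ysection _ _ = set0) ?measure0 //.
apply/seteqP; split => x //= /set_mem[_ Ay].
by move: nAy; rewrite (mem_set Ay).
Qed.

(* The argument of [integral_kcomp], with the arbitrary measure m in place of an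
   s-finite kernel. *)
Section integral.
Variable Q : R.-ker X ~> X.
Hypothesis Qinv : kernel_invariant Q.
Import HBNNSimple.

Let integral_indic_invariant E : measurable E ->
  \int[m]_z (\1_E z)%:E = \int[m]_y (\int[Q y]_z (\1_E z)%:E).
Proof.
move=> mE; rewrite integral_indic // setIT -Qinv //.
by apply: eq_integral => y _; rewrite integral_indic // setIT.
Qed.

Let integral_nnsfun_invariant (f : {nnsfun X >-> R}) :
  \int[m]_z (f z)%:E = \int[m]_y (\int[Q y]_z (f z)%:E).
Proof.
under [in LHS]eq_integral do rewrite fimfunE -fsumEFin //.
rewrite ge0_integral_fsum //; last 2 first.
  - by move=> r; exact/measurable_EFinP/measurableT_comp.
  - by move=> r z _; rewrite EFinM nnfun_muleindic_ge0.
under [in RHS]eq_integral.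
  move=> y _.
  under eq_integral do rewrite fimfunE -fsumEFin //.
  rewrite /= ge0_integral_fsum //; last 2 first.
    - by move=> r; exact/measurable_EFinP/measurableT_comp.
    - by move=> r z _; rewrite EFinM nnfun_muleindic_ge0.
  under eq_fsbigr.
    move=> r _.
    rewrite (integralZl_indic _ (fun r => f @^-1` [set r])) //; last first.
      by move=> r0; rewrite preimage_nnfun0.
    rewrite integral_indic // setIT.
    over.
  over.
rewrite /= ge0_integral_fsum //; last 2 first.
  - move=> r; apply: measurable_funeM.
    exact: (measurable_kernel Q (f @^-1` [set r]) _).
  - move=> n y _.
    have := mulemu_ge0 (fun n => f @^-1` [set n]).
    by apply; exact: preimage_nnfun0.
apply: eq_fsbigr => r _.
rewrite (integralZl_indic _ (fun r => f @^-1` [set r])) //; last first.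
  exact: preimage_nnfun0.
rewrite /= integral_indic_invariant //.
have [r0|r0] := leP 0%R r.
  rewrite ge0_integralZl //.
    by under eq_integral do rewrite integral_indic // setIT.
  exact: (measurable_kernel Q (f @^-1` [set r]) _).
rewrite integral0_eq ?mule0.
  by rewrite integral0_eq // => y _; rewrite preimage_nnfun0 // measure0 mule0.
by move=> y _; rewrite integral0_eq // => z _; rewrite preimage_nnfun0 // indic0.
Qed.

Lemma integral_kernel_invariant f : (forall z, 0 <= f z) ->
  measurable_fun [set: X] f ->
  \int[m]_z f z = \int[m]_y (\int[Q y]_z f z).
Proof.
move=> f_ge0 mf; pose f_ := nnsfun_approx measurableT mf.
have f_nd z : {homo (fun n => (f_ n z)%:E) : a b / (a <= b)%N >-> a <= b}.
  by move=> a b ab; rewrite lee_fin; exact/lefP/nd_nnsfun_approx.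
have f_cvg z : (f_ n z)%:E @[n --> \oo] --> f z by exact: cvg_nnsfun_approx.
have mf_ n : measurable_fun setT (fun z => (f_ n z)%:E) by exact/measurable_EFinP.
transitivity (\int[m]_z lim ((f_ n z)%:E @[n --> \oo])).
  by apply/eq_integral => z _; rewrite (cvg_lim _ (f_cvg z)).
rewrite monotone_convergence //; last by move=> n z _; rewrite lee_fin.
under eq_fun do rewrite integral_nnsfun_invariant.
rewrite -monotone_convergence //; last 3 first.
- move=> n; apply: measurable_fun_integral_kernel => //.
    by move=> U mU; exact: (measurable_kernel Q _ mU).
  by move=> z; rewrite lee_fin.
- by move=> n y _; apply: integral_ge0 => // z _; rewrite lee_fin.
- move=> y _ a b ab; apply: ge0_le_integral => //.
    by move=> z _; rewrite lee_fin.
  by move=> z _; exact: f_nd.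
apply: eq_integral => y _.
rewrite -monotone_convergence //; last by move=> n z _; rewrite lee_fin.
by apply: eq_integral => z _; rewrite (cvg_lim _ (f_cvg z)).
Qed.

End integral.
End invariant_measure.

Section kernel_sqr_sub.
Context d (X : measurableType d) (R : realType).
Variable Q : R.-pker X ~> X.
Local Open Scope ereal_scope.

Lemma measurable_integral_kernel_sqr_sub (w : X -> R) : measurable_fun setT w ->
  measurable_fun setT (fun x => \int[Q x]_y ((w x - w y) ^+ 2)%:E).
Proof.
move=> mw; apply: (measurable_fun_integral_finite_kernel
  (fun z => ((w z.1 - w z.2) ^+ 2)%:E) Q); first by move=> z; rewrite lee_fin sqr_ge0.
by apply: measurable_EFin_sqr; apply: measurable_funB;
  [exact: measurableT_comp mw measurable_fst | exact: measurableT_comp mw measurable_snd].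
Qed.

Lemma integral_kernel_sqr_sub_le (w : X -> R) x : measurable_fun setT w ->
  \int[Q x]_y ((w x - w y) ^+ 2)%:E <=
  (2 * w x ^+ 2)%:E + 2%:E * \int[Q x]_y (w y ^+ 2)%:E.
Proof.
move=> mw; have mw2 := measurable_EFin_sqr mw.
rewrite -[in X in _ + X]ge0_integralZl //; last by move=> y _; rewrite lee_fin sqr_ge0.
rewrite -[X in X + _](mule1 _) -(@prob_kernel _ _ _ _ _ Q x) -integral_cst //.
rewrite -ge0_integralD //; last 3 first.
- by move=> z _; rewrite /= lee_fin mulr_ge0 ?sqr_ge0.
- by move=> z _; rewrite -EFinM lee_fin mulr_ge0 ?sqr_ge0.
- exact: measurable_funeM.
apply: ge0_le_integral => //.
- by move=> y _; rewrite lee_fin sqr_ge0.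
- by apply: measurable_EFin_sqr; apply: measurable_funB.
- by apply: emeasurable_funD => //; exact: measurable_funeM.
move=> y _; rewrite -EFinM -EFinD lee_fin -subr_ge0.
have -> : (2 * w x ^+ 2 + 2 * w y ^+ 2 - (w x - w y) ^+ 2 = (w x + w y) ^+ 2)%R.
  by ring.
exact: sqr_ge0.
Qed.

Lemma integral_sqr_sub_kernel_le (m : {measure set X -> \bar R}) (w : X -> R) :
  kernel_invariant m Q -> measurable_fun setT w ->
  \int[m]_x \int[Q x]_y ((w x - w y) ^+ 2)%:E <= 4%:E * l2sq m w.
Proof.
move=> Qinv mw; have mw2 := measurable_EFin_sqr mw.
have mQw2 : measurable_fun setT (fun x => \int[Q x]_y (w y ^+ 2)%:E).
  apply: measurable_fun_integral_kernel => //; last by move=> z; rewrite lee_fin sqr_ge0.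
  by move=> U mU; exact: (measurable_kernel Q _ mU).
have mtwice : measurable_fun setT (fun x => (2 * w x ^+ 2)%:E).
  by apply/measurable_EFinP; apply: measurable_funM => //; exact: measurable_funX.
have mG := measurable_integral_kernel_sqr_sub mw.
apply: (@le_trans _ _ (\int[m]_x ((2 * w x ^+ 2)%:E + 2%:E * \int[Q x]_y (w y ^+ 2)%:E))).
  apply: ge0_le_integral => //.
  - by move=> x _; apply: integral_ge0 => y _; rewrite lee_fin sqr_ge0.
  - exact: emeasurable_funD (measurable_funeM _ mQw2).
  - by move=> x _; exact: integral_kernel_sqr_sub_le.
rewrite ge0_integralD //; last 3 first.
- by move=> x _; rewrite lee_fin mulr_ge0 ?sqr_ge0.
- by move=> x _; rewrite mule_ge0 // integral_ge0 // => y _; rewrite lee_fin sqr_ge0.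
- exact: measurable_funeM.
rewrite ge0_integralZl //; last by move=> x _; apply: integral_ge0 => y _; rewrite lee_fin sqr_ge0.
rewrite -integral_kernel_invariant //; last by move=> y; rewrite lee_fin sqr_ge0.
under eq_integral do rewrite EFinM.
rewrite ge0_integralZl //; last by move=> y _; rewrite lee_fin sqr_ge0.
have -> : 4%:E = 2%:E + 2%:E :> \bar R by rewrite -EFinD; congr EFin; lra.
by rewrite ge0_muleDl ?lee_fin.
Qed.

End kernel_sqr_sub.

Lemma jump_form_le_l2sq (R : realType) (k : nat) (lam0 : R)
    (m : {measure set (k.-tuple R) -> \bar R})
    (Q : R.-pker (k.-tuple R) ~> (k.-tuple R)) (w : k.-tuple R -> R) :
  0 < lam0 -> kernel_invariant m Q -> L2 m w ->
  jump_form lam0 m Q w w <= 2 * lam0 * fine (l2sq m w).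
Proof.
move=> lam0_gt0 Qinv [mw w_fin]; have lam0_ge0 := ltW lam0_gt0.
pose G x := (\int[Q x]_y ((w x - w y) ^+ 2)%:E)%E.
have G_ge0 x : (0 <= G x)%E by apply: integral_ge0 => y _; rewrite lee_fin sqr_ge0.
have mG : measurable_fun setT G := measurable_integral_kernel_sqr_sub Q mw.
pose I := (\int[m]_x (lam0 * fine (G x))%:E)%E.
have -> : jump_form lam0 m Q w w = 2^-1 * fine I by [].
have L_fin : l2sq m w \is a fin_num by rewrite ge0_fin_numE ?l2sq_ge0.
have I_ge0 : (0 <= I)%E.
  by apply: integral_ge0 => x _; rewrite lee_fin mulr_ge0 // fine_ge0.
have I_le : (I <= (lam0 * (4 * fine (l2sq m w)))%:E)%E.
  apply: (@le_trans _ _ (lam0%:E * \int[m]_x G x)%E).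
    rewrite -ge0_integralZl //; apply: ge0_le_integral => //.
    - by move=> x _; rewrite lee_fin mulr_ge0 // fine_ge0.
    - by apply/measurable_EFinP; apply: measurable_funM => //; exact: measurableT_comp mG.
    - exact: measurable_funeM.
    move=> x _; have := G_ge0 x; case: (G x) => [r||] //= _.
    by rewrite mulr0 mule_ge0.
  rewrite !EFinM (fineK L_fin) lee_wpmul2l //.
  exact: integral_sqr_sub_kernel_le.
have I_fin : I \is a fin_num by rewrite ge0_fin_numE // (le_lt_trans I_le) ?ltry.
have : fine I <= lam0 * (4 * fine (l2sq m w)) by rewrite -lee_fin fineK.
lra.
Qed.

Section dense_bounded_form.
Context d (T : measurableType d) (R : realType).
Variables (m : {measure set T -> \bar R}) (F : set (T -> R)).
Variables (E : (T -> R) -> (T -> R) -> R) (C : R).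
Hypothesis FL2 : F `<=` L2 m.
Hypothesis Flin : forall (a : R) f g, F f -> F g -> F (fun x => a * f x + g x).
Hypothesis Fae : forall f g, F f -> L2 m g -> ae_equal m f g -> F g.
Hypothesis Fclosed : closed_form m F E.
Hypothesis E_ge0 : forall f, F f -> 0 <= E f f.
Hypothesis C_ge0 : 0 <= C.
Hypothesis E_le : forall w, F w -> E w w <= C * fine (l2sq m w).

Lemma F_sub f g : F f -> F g -> F (fun x => f x - g x).
Proof.
move=> Ff Fg; have := Flin (-1) Fg Ff.
by congr F; apply/funext => x; rewrite mulN1r addrC.
Qed.

Lemma E1sq_le_l2sq w : F w -> (E1sq m E w <= ((C + 1) * fine (l2sq m w))%:E)%E.
Proof.
move=> Fw; have L_fin : l2sq m w \is a fin_num.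
  by rewrite ge0_fin_numE ?l2sq_ge0 //; case: (FL2 Fw).
rewrite /E1sq -[X in (_ + X)%E](fineK L_fin) -EFinD lee_fin mulrDl mul1r.
by rewrite lerD2r E_le.
Qed.

Lemma l2sq_le_E1sq w : F w -> (l2sq m w <= E1sq m E w)%E.
Proof. by move=> Fw; rewrite /E1sq leeDr // lee_fin E_ge0. Qed.

Lemma E1sq_cauchy_of_l2sq_approx (f : T -> R) (g : nat -> T -> R) :
  measurable_fun setT f -> (forall n, F (g n)) ->
  (forall n : nat, (l2sq m (fun x => f x - g n x)%R < n.+1%:R^-1%:E)%E) ->
  forall e : R, 0 < e -> exists N, forall n p, (N <= n)%N -> (N <= p)%N ->
    (E1sq m E (fun x => (g n x - g p x)%R) < e%:E)%E.
Proof.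
move=> mf Fg fg_lt e e_gt0.
have mg n : measurable_fun setT (g n) by case: (FL2 (Fg n)).
have C1_ge0 : 0 <= 2 * (C + 1) by rewrite mulr_ge0 // addr_ge0.
have [N gN] := exists_mulr_invSn_lt C1_ge0 (divr_gt0 e_gt0 (ltr0n _ 2)).
exists N => n p Nn Np; apply: le_lt_trans (E1sq_le_l2sq (F_sub (Fg n) (Fg p))) _.
have gnf_lt : (l2sq m (fun x => g n x - f x)%R < n.+1%:R^-1%:E)%E.
  by rewrite l2sq_subC.
have gnp_lt := l2sq_sub_lt (mg n) (mg p) mf gnf_lt (fg_lt p).
have {}gnp_lt : fine (l2sq m (fun x => g n x - g p x)%R) <
    2 * n.+1%:R^-1 + 2 * p.+1%:R^-1 by rewrite -lte_fin fineK ?(l2sq_fin_num gnp_lt).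
rewrite lte_fin (splitr e); apply: le_lt_trans (ler_wpM2l _ (ltW gnp_lt)) _.
  by rewrite addr_ge0.
by rewrite mulrDr !mulrA ![(C + 1) * 2]mulrC ltrD ?gN.
Qed.

Lemma L2_subset_dense_closed_form : dense_in_L2 m F -> L2 m `<=` F.
Proof.
move=> Fdense f L2f; have [mf _] := L2f.
have /choice[g /all_and2[Fg fg_lt]] : forall n : nat, exists g,
    F g /\ (l2sq m (fun x => f x - g x)%R < n.+1%:R^-1%:E)%E.
  by move=> n; apply: Fdense => //; rewrite invr_gt0.
have mg n : measurable_fun setT (g n) by case: (FL2 (Fg n)).
have [v Fv gv_E1] := Fclosed Fg (E1sq_cauchy_of_l2sq_approx mf Fg fg_lt).
have mv : measurable_fun setT v by case: (FL2 Fv).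
apply: (Fae Fv L2f); apply: ae_equal_of_l2sq_lt => // e e_gt0.
rewrite l2sq_subC.
have [N1 gv_lt] := gv_E1 _ (divr_gt0 e_gt0 (ltr0n _ 4)).
have [N2 invN2] := exists_mulr_invSn_lt ler01 (divr_gt0 e_gt0 (ltr0n _ 4)).
pose n := maxn N1 N2.
have gnv_lt := le_lt_trans (l2sq_le_E1sq (F_sub (Fg n) Fv)) (gv_lt n (leq_maxl _ _)).
have fn_lt : (l2sq m (fun x => f x - g n x)%R < (e / 4%:R)%:E)%E.
  apply: lt_le_trans (fg_lt n) _; rewrite lee_fin.
  by move: (invN2 n (leq_maxr _ _)); rewrite mul1r => /ltW.
apply: lt_le_trans (l2sq_sub_lt mf mv (mg n) fn_lt gnv_lt) _.
by rewrite lee_fin; lra.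
Qed.

End dense_bounded_form.

Theorem corollary4p2 (R : realType) (k : nat) (lam0 : R)
    (m : {measure set (k.-tuple R) -> \bar R})
    (Q : R.-pker (k.-tuple R) ~> (k.-tuple R)) :
  (1 <= k)%N ->
  0 < lam0 ->
  (* m(dx) = lam0^{-1} dx, i.e. m is lam0^{-1} times Lebesgue measure on R^k *)
  (forall a b : k.-tuple R, m (box a b) = (lam0^-1 * box_vol a b)%:E) ->
  (* spatial homogeneity: Q(x, dy) = Q(x - z, dy - z) *)
  (forall (x z : k.-tuple R) (A : set (k.-tuple R)), measurable A ->
     Q x A = Q (tsub x z) [set tsub y z | y in A]) ->
  (* Q(0, {0}) = 0 *)
  Q tzero [set tzero] = 0%E ->
  (* symmetry w.r.t. Lebesgue measure dx = lam0 m(dx): Q(x,dy)dx = Q(y,dx)dy *)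
  (forall C : set (k.-tuple R * k.-tuple R), measurable C ->
     (lam0%:E * \int[m]_x Q x (xsection C x) =
      lam0%:E * \int[m]_y Q y (ysection C y))%E) ->
  forall (F' : set (k.-tuple R -> R))
         (E' : (k.-tuple R -> R) -> (k.-tuple R -> R) -> R),
    is_regular_dirichlet_subspace m (L2 m) (jump_form lam0 m Q) F' E' ->
    F' = L2 m /\
    (forall u v, L2 m u -> L2 m v -> E' u v = jump_form lam0 m Q u v).
Proof.
move=> _ lam0_gt0 _ _ _ Qsym F' E'.
move=> [[[[F'L2 _ F'lin F'ae _] F'dense [_ _ E'_ge0] F'closed _] _ _] _ E'E].
have Qinv : kernel_invariant m Q.
  apply: kernel_invariant_of_symmetric => C mC.
  move: (Qsym C mC) => /(congr1 (fun z => (lam0^-1)%:E * z)%E).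
  by rewrite !muleA -EFinM mulVf ?gt_eqF // !mul1e.
have E'_le w : F' w -> E' w w <= 2 * lam0 * fine (l2sq m w).
  by move=> F'w; rewrite E'E //; exact: jump_form_le_l2sq (F'L2 _ F'w).
have L2F' : L2 m `<=` F'.
  apply: (L2_subset_dense_closed_form F'L2 F'lin F'ae F'closed E'_ge0 _ E'_le) => //.
  by rewrite mulr_ge0 // ltW.
have F'E : F' = L2 m by apply/seteqP; split.
by split=> // u v L2u L2v; rewrite E'E ?F'E.
Qed.
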